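(* Let $\mathcal{S}$ be a relational structure admitting an injective unary FA-presentation $(a^*,\phi)$, and let $R$ be a binary relation in the signature of $\mathcal{S}$. Let $Q$ be the equivalence relation generated by $R$. Then $\Lambda(Q,\phi)=\{(u,v)\in a^*\times a^*:(u\phi,v\phi)\in Q\}$ is regular. Hence $\mathcal{S}$ augmented by $Q$ is also unary FA-presentable.
   Context: For words $w_1,\dots,w_r$ over a finite alphabet $A$, $\mathrm{conv}(w_1,\dots,w_r)$ is the word over $(A\cup\{\$\})^r$ (with $\$\notin A$) whose $j$-th letter is the tuple of $j$-th letters of the $w_i$, shorter words being padded at the end with $\$$. A relation $X\subseteq (A^* )^r$ is regular if $\{\mathrm{conv}(w_1,\dots,w_r):(w_1,\dots,w_r)\in X\}$ is a regular language. An FA-presentation of a relational structure $\mathcal{S}=(S,R_1,\dots,R_n)$ is a pair $(L,\phi)$ with $L$ a regular language over a finite alphabet and $\phi:L\to S$ surjective such that for every relation $R\in\{=,R_1,\dots,R_n\}$ of arity $r$ the relation $\Lambda(R,\phi)=\{(w_1,\dots,w_r)\in L^r : R(w_1\phi,\dots,w_r\phi)\}$ is regular. It is unary if $L$ is over a one-letter alphabet $\{a\}$; a structure is unary FA-presentable if it admits one. An injective unary FA-presentation $(a^*,\phi)$ is one with $L=a^*$ and $\phi$ injective. *)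

From Stdlib Require Import Relations.
From mathcomp Require Import all_boot.
Set Implicit Arguments. Unset Strict Implicit. Unset Printing Implicit Defensive.

Record dfa (Sigma : finType) := DFA {
  dfa_state : finType;
  dfa_start : dfa_state;
  dfa_final : pred dfa_state;
  dfa_trans : dfa_state -> Sigma -> dfa_state }.

Definition dfa_accepts (Sigma : finType) (M : dfa Sigma) (w : seq Sigma) : bool :=
  @dfa_final Sigma M (foldl (@dfa_trans Sigma M) (@dfa_start Sigma M) w).

Definition regular (Sigma : finType) (L : seq Sigma -> Prop) : Prop :=
  exists M : dfa Sigma, forall w, L w <-> dfa_accepts M w.

(* The padding symbol $ is [None]; the alphabet (A u {$})^r is
   {ffun 'I_r -> option A}. *)
Definition conv (A : finType) (r : nat) (ws : r.-tuple (seq A))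
  : seq {ffun 'I_r -> option A} :=
  mkseq (fun j => [ffun i => onth (tnth ws i) j]) (\max_(i < r) size (tnth ws i)).

Definition regular_rel (A : finType) (r : nat) (X : r.-tuple (seq A) -> Prop) : Prop :=
  regular (fun w => exists ws, X ws /\ conv ws = w).

Definition Lambda (S : Type) (Sigma : finType) (L : seq Sigma -> Prop)
  (phi : seq Sigma -> S) (r : nat) (R : r.-tuple S -> Prop)
  : r.-tuple (seq Sigma) -> Prop :=
  fun ws => (forall k, L (tnth ws k)) /\ R (map_tuple phi ws).

Definition eq_rel2 (S : Type) (t : 2.-tuple S) : Prop := tnth t ord0 = tnth t ord_max.

Definition FA_presentation (S : Type) (I : finType) (ar : I -> nat)
  (rels : forall i, (ar i).-tuple S -> Prop)
  (Sigma : finType) (L : seq Sigma -> Prop) (phi : seq Sigma -> S) : Prop :=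
  [/\ regular L,
      (forall s : S, exists w, L w /\ phi w = s),
      regular_rel (Lambda L phi (@eq_rel2 S))
    & forall i, regular_rel (Lambda L phi (rels i))].

(* Unary: the alphabet is the one-letter alphabet {a}, modelled by [unit]. *)
Definition unary_FA_presentable (S : Type) (I : finType) (ar : I -> nat)
  (rels : forall i, (ar i).-tuple S -> Prop) : Prop :=
  exists (L : seq unit -> Prop) (phi : seq unit -> S), FA_presentation rels L phi.

Definition injective_unary_FA_presentation (S : Type) (I : finType) (ar : I -> nat)
  (rels : forall i, (ar i).-tuple S -> Prop) (phi : seq unit -> S) : Prop :=
  FA_presentation rels (fun _ => True) phi /\ injective phi.

Definition binrel (S : Type) (I : finType) (ar : I -> nat)
  (rels : forall i, (ar i).-tuple S -> Prop) (i : I) (hi : ar i = 2)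
  : S -> S -> Prop :=
  fun x y => rels i (tcast (esym hi) [tuple x; y]).

Definition gen_equiv (S : Type) (R : S -> S -> Prop) : S -> S -> Prop :=
  clos_refl_sym_trans S R.

Definition aug_ar (I : finType) (ar : I -> nat) (o : option I) : nat :=
  if o is Some i then ar i else 2.

Definition aug_rels (S : Type) (I : finType) (ar : I -> nat)
  (rels : forall i, (ar i).-tuple S -> Prop) (Q : S -> S -> Prop)
  : forall o : option I, (aug_ar ar o).-tuple S -> Prop :=
  fun o => match o as o0 return (aug_ar ar o0).-tuple S -> Prop with
           | Some i => rels i
           | None => fun t => Q (tnth t ord0) (tnth t ord_max)
           end.

From Stdlib Require Import Relations Classical ClassicalEpsilon.
From mathcomp Require Import all_boot zify.
Set Implicit Arguments. Unset Strict Implicit. Unset Printing Implicit Defensive.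

(* Over the one-letter alphabet, identify a^m with m.  A regular binary
   relation R on words is then ultimately periodic: there are K and p > 0 such
   that shifting two arguments >= K by p, or shifting the larger of two
   arguments at distance >= K by p, does not change R (pigeonhole on the
   iterates of the transition maps of an automaton).  Conversely a symmetric
   ultimately periodic relation is recognised by an automaton with two
   counters that wrap around modulo p above K.

   The point is that ultimate periodicity survives the passage to the
   equivalence closure Q.  Call x stable when x Q x + P, for a suitable
   multiple P of p.  The upper end of a long edge is stable, and a path from x
   that climbs by p * K through points >= K passes two points congruent mod p
   at distance <= (p + 1) K; pumping this loop reaches x + P.  Hence the class
   of an unstable x stays within p * K of x, uses only edges between points
   >= K, and is moved by P onto the class of x + P, while a stable x is
   Q-related to x + P.  Both periodicity conditions for Q follow. *)

Local Arguments rt_step {A R x y}.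
Local Arguments rt_refl {A R x}.
Local Arguments rt_trans {A R x y z}.

Definition ult_periodic (R : nat -> nat -> Prop) (K p : nat) : Prop :=
  [/\ 0 < p,
      forall m n, K <= m -> K <= n -> (R m n <-> R (m + p) (n + p))
    & forall m n, m + K <= n -> (R m n <-> R m (n + p))].

Lemma eq_modn_shift (p m m' : nat) : m = m' %[mod p] ->
  exists a a', m + a * p = m' + a' * p.
Proof.
move=> e; exists (m' %/ p), (m %/ p).
rewrite {1}(divn_eq m p) {2}(divn_eq m' p) e; lia.
Qed.

Lemma ult_periodic_or (R R' : nat -> nat -> Prop) K p :
  ult_periodic R K p -> ult_periodic R' K p ->
  ult_periodic (fun m n => R m n \/ R' m n) K p.
Proof.
case=> p_gt0 sh gap [_ sh' gap']; split=> // m n *.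
  by rewrite (sh m n) // (sh' m n).
by rewrite (gap m n) // (gap' m n).
Qed.

Section UltPeriodic.
Variables (R : nat -> nat -> Prop) (K p : nat).
Hypothesis R_per : ult_periodic R K p.

Lemma ult_periodic_gt0 : 0 < p. Proof. by case: R_per. Qed.

Lemma ult_periodic_shiftn c m n : K <= m -> K <= n ->
  (R m n <-> R (m + c * p) (n + c * p)).
Proof.
case: R_per => _ sh _ hm hn; elim: c => [|c IH]; first by rewrite mul0n !addn0.
by rewrite IH (sh (m + c * p)) ?mulSnr ?addnA //; lia.
Qed.

Lemma ult_periodic_gapn c m n : m + K <= n -> (R m n <-> R m (n + c * p)).
Proof.
case: R_per => _ _ gap hmn; elim: c => [|c IH]; first by rewrite mul0n addn0.
by rewrite IH (gap m (n + c * p)) ?mulSnr ?addnA //; lia.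
Qed.

Lemma ult_periodic_gap_modp m n n' : m + K <= n -> m + K <= n' ->
  n = n' %[mod p] -> (R m n <-> R m n').
Proof.
move=> hn hn' /eq_modn_shift [a [a' e]].
by rewrite (ult_periodic_gapn a hn) e -ult_periodic_gapn.
Qed.

Lemma ult_periodic_modp m n m' n' :
  K <= m -> K <= m' -> m + K <= n -> m' + K <= n' ->
  m = m' %[mod p] -> n = n' %[mod p] -> (R m n <-> R m' n').
Proof.
move=> hm hm' hn hn' /eq_modn_shift [a [a' e]] enn.
rewrite (ult_periodic_shiftn a hm) ?(ult_periodic_shiftn a' hm' (n := n')); try lia.
rewrite e; apply: ult_periodic_gap_modp; try lia.
by rewrite (addnC n) (addnC n') !modnMDl.
Qed.

End UltPeriodic.

Section ClosRT.
Variables (A B : Type) (R : relation A).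

Lemma clos_rt_map (R' : relation B) (f : A -> B) :
  (forall x y, R x y -> R' (f x) (f y)) ->
  forall x y, clos_refl_trans A R x y -> clos_refl_trans B R' (f x) (f y).
Proof.
move=> fR x y; elim=> [{}x {}y /fR|{}x|{}x y' z _ IH1 _ IH2].
- exact: rt_step.
- exact: rt_refl.
- exact: rt_trans IH1 IH2.
Qed.

Lemma clos_rt_sym : (forall x y, R x y -> R y x) ->
  forall x y, clos_refl_trans A R x y -> clos_refl_trans A R y x.
Proof.
move=> Rsym x y; elim=> [{}x {}y /Rsym|{}x|{}x y' z _ IH1 _ IH2].
- exact: rt_step.
- exact: rt_refl.
- exact: rt_trans IH2 IH1.
Qed.

End ClosRT.

Lemma clos_rst_bij (A B : Type) (f : A -> B) (R : relation B) :
  injective f -> (forall y, exists x, f x = y) -> forall a b,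
  clos_refl_sym_trans B R (f a) (f b) <->
  clos_refl_trans A (fun x y => R (f x) (f y) \/ R (f y) (f x)) a b.
Proof.
move=> f_inj f_onto.
suff fwd u v : clos_refl_sym_trans B R u v -> forall a b, f a = u -> f b = v ->
    clos_refl_trans A (fun x y => R (f x) (f y) \/ R (f y) (f x)) a b.
  move=> a b; split=> [/fwd/(_ a b erefl erefl) //|].
  elim=> [x y [Rxy|Ryx]|x|x y z _ IH1 _ IH2].
  - exact: rst_step.
  - exact/rst_sym/rst_step.
  - exact: rst_refl.
  - exact: rst_trans IH1 IH2.
elim=> {u v} [u v Ruv|u|u v _ IH|u v w _ IH1 _ IH2] a b fa fb.
- by apply: rt_step; left; rewrite fa fb.
- have -> : a = b by apply: f_inj; rewrite fa fb.
  exact: rt_refl.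
- by apply: clos_rt_sym (IH b a fb fa) => x y [|]; [right|left].
- have [c fc] := f_onto v.
  exact: rt_trans (IH1 a c fa fc) (IH2 c b fc fb).
Qed.

Lemma modn_pigeonhole p (f : 'I_p.+1 -> nat) : 0 < p ->
  exists i j : 'I_p.+1, i < j /\ f i = f j %[mod p].
Proof.
move=> p_gt0; pose r i : 'I_p := Ordinal (ltn_pmod (f i) p_gt0).
have /injectivePn [i [j neq_ij eq_r]] : ~~ injectiveb r.
  by apply/injectiveP => /leq_card; rewrite !card_ord ltnn.
have eq_mod : f i = f j %[mod p] by move/(congr1 val): eq_r.
case: (ltngtP i j) => [lt_ij|lt_ji|/val_inj eq_ij]; first by exists i, j.
- by exists j, i.
- by rewrite eq_ij eqxx in neq_ij.
Qed.

Section EquivClosure.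
Variables (E : nat -> nat -> Prop) (K p : nat).
Hypothesis K_gt0 : 0 < K.
Hypothesis E_sym : forall m n, E m n -> E n m.
Hypothesis E_per : ult_periodic E K p.

Local Notation Q := (clos_refl_trans nat E).

Let p_gt0 := ult_periodic_gt0 E_per.

(* A loop of length [0 < d <= p.+1 * K] with [p %| d] pumps up to length
   [clos_period], as [d] divides [(p.+1 * K)`!]. *)
Definition clos_period := p * (p.+1 * K)`!.

Lemma clos_period_gt0 : 0 < clos_period.
Proof. by rewrite muln_gt0 p_gt0 fact_gt0. Qed.

Lemma leq_pK_clos_period : p * K <= clos_period.
Proof. by rewrite leq_mul2l (leq_trans _ (fact_geq _)) ?leq_pmull ?orbT. Qed.

Lemma clos_period_mulnp : clos_period = (p.+1 * K)`! * p.
Proof. exact: mulnC. Qed.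

Lemma Q_sym x y : Q x y -> Q y x.
Proof. exact: clos_rt_sym. Qed.

Definition stable x := Q x (x + clos_period).

Lemma long_edge_stable z w : E z w -> z + K <= w -> stable w.
Proof.
move=> Ezw zKw; apply: rt_trans (rt_step (E_sym Ezw)) (rt_step _).
by rewrite clos_period_mulnp -(ult_periodic_gapn E_per).
Qed.

Definition Ehigh a b := [/\ E a b, K <= a & K <= b].
Local Notation Qhigh := (clos_refl_trans nat Ehigh).

Lemma Qhigh_Q a b : Qhigh a b -> Q a b.
Proof. by apply: (clos_rt_map (f := id)) => x y []. Qed.

Lemma Qhigh_sym a b : Qhigh a b -> Qhigh b a.
Proof. by apply: clos_rt_sym => x y [/E_sym]. Qed.

Lemma Qhigh_shift c a b : Qhigh a b -> Qhigh (a + c * p) (b + c * p).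
Proof.
apply: (clos_rt_map (f := addn^~ (c * p))) => x y [Exy Kx Ky] /=.
by split; [rewrite -(ult_periodic_shiftn E_per) | lia | lia].
Qed.

Lemma Qhigh_shift_clos_period a b :
  Qhigh a b -> Qhigh (a + clos_period) (b + clos_period).
Proof. by rewrite clos_period_mulnp; apply: Qhigh_shift. Qed.

Lemma stable_Qhigh x v : Qhigh x v -> stable v -> stable x.
Proof.
move=> QHxv stable_v; apply: rt_trans (Qhigh_Q QHxv) _; apply: rt_trans stable_v _.
exact/Qhigh_Q/Qhigh_sym/Qhigh_shift_clos_period.
Qed.

Definition reaches_stable a := exists2 g, Qhigh a g & stable g.

(* An [Ehigh]-path crossing level [L] either makes an edge of length at least
   [K], whose upper end is stable, or stops within [K] above [L]. *)
Lemma Qhigh_cross L a b : Qhigh a b -> a <= L <= b ->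
  reaches_stable a \/ exists2 v, Qhigh a v & L <= v < L + K.
Proof.
move/clos_rt_rt1n_iff; elim=> [x|x y z Ehigh_xy _ IH] /andP[Lx Lz].
  by right; exists x; first exact: rt_refl; lia.
have QHxy : Qhigh x y by apply: rt_step.
have [Exy _ _] := Ehigh_xy.
case: (leqP y L) => [yL|Ly].
  case: (IH _) => [|[g QHyg sg]|[v QHyv Lv]]; first by rewrite yL.
  - by left; exists g => //; exact: rt_trans QHxy QHyg.
  - by right; exists v => //; exact: rt_trans QHxy QHyv.
case: (ltnP y (L + K)) => yLK; first by right; exists y => //; lia.
by left; exists y; last by apply: long_edge_stable Exy _; lia.
Qed.

Lemma Qhigh_pump v d k : Qhigh v (v + d) -> p %| d -> Qhigh v (v + k * d).
Proof.
move=> QHvd /dvdnP [q def_d]; subst d.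
elim: k => [|k IH]; first by rewrite addn0; exact: rt_refl.
apply: rt_trans IH _; have := Qhigh_shift (k * q) QHvd.
by rewrite !mulnA mulSnr mulnDl addnA (addnAC v).
Qed.

Lemma Qhigh_loop_stable v d : Qhigh v (v + d) -> p %| d -> 0 < d <= p.+1 * K ->
  stable v.
Proof.
move=> QHvd p_d d_range.
have /dvdnP [t def_fact] : d %| (p.+1 * K)`! by exact: dvdn_fact.
have := Qhigh_pump (p * t) QHvd p_d.
by rewrite -mulnA -def_fact => /Qhigh_Q.
Qed.

(* Each of the [p.+1] windows [a + i * K + [0, K)] is visited, unless a stable
   point is reached first; two of the visited points are congruent mod [p]. *)
Lemma Qhigh_far_stable a b : Qhigh a b -> a + p * K <= b -> reaches_stable a.
Proof.
move=> QHab far; apply: NNPP => not_stable.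
have win (i : 'I_p.+1) : exists v, Qhigh a v /\ a + i * K <= v < a + i * K + K.
  have iK : i * K <= p * K := leq_mul (leq_ord i) (leqnn K).
  case: (Qhigh_cross (L := a + i * K) QHab _) => [|//|[v]]; first by lia.
  by exists v.
pose f (i : 'I_p.+1) := proj1_sig (constructive_indefinite_description _ (win i)).
have f_win i : Qhigh a (f i) /\ a + i * K <= f i < a + i * K + K.
  exact: proj2_sig (constructive_indefinite_description _ (win i)).
have [i [j [lt_ij eq_mod]]] := modn_pigeonhole f p_gt0.
have [[QHi wi] [QHj wj]] := (f_win i, f_win j).
have iKjK : i.+1 * K <= j * K by rewrite leq_mul2r lt_ij orbT.
have jK : j * K <= p * K := leq_mul (leq_ord j) (leqnn K).
rewrite mulSn in iKjK; apply: not_stable; exists (f i) => //.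
apply: (Qhigh_loop_stable (d := f j - f i)); last by lia.
  by rewrite subnKC; [exact: rt_trans (Qhigh_sym QHi) QHj | lia].
by rewrite -eqn_mod_dvd; [rewrite eq_mod | lia].
Qed.

Lemma unstable_window x y : ~ stable x -> Qhigh x y ->
  x < y + p * K /\ y < x + p * K.
Proof.
move=> not_sx QHxy; split; rewrite ltnNge; apply/negP => far; apply: not_sx.
- have [g QHyg sg] := Qhigh_far_stable (Qhigh_sym QHxy) far.
  exact: stable_Qhigh (rt_trans QHxy QHyg) sg.
- by have [g QHxg sg] := Qhigh_far_stable QHxy far; exact: stable_Qhigh QHxg sg.
Qed.

(* Large enough that the [p * K]-window around an unstable [x >= clos_thr]
   lies above [K], and above the points [z %% p + p * K] by more than [K]. *)
Definition clos_thr := 2 * (p * K) + p + 3 * K.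

Lemma leq_K_pK : K <= p * K.
Proof. by rewrite leq_pmull ?p_gt0. Qed.

Lemma unstable_short_edge x v z : ~ stable x -> clos_thr <= x -> Qhigh x v -> E v z ->
  v < z + K /\ z < v + K.
Proof.
move=> not_sx thr_x QHxv Evz; have [w1 w2] := unstable_window not_sx QHxv.
have := leq_K_pK; rewrite /clos_thr in thr_x => K_pK.
split; rewrite ltnNge; apply/negP => long; apply: not_sx.
- exact: stable_Qhigh QHxv (long_edge_stable (E_sym Evz) long).
- have QHxz : Qhigh x z by apply: rt_trans QHxv (rt_step _); split=> //; lia.
  exact: stable_Qhigh QHxz (long_edge_stable Evz long).
Qed.

Lemma unstable_QH_step x v z : ~ stable x -> clos_thr <= x -> Qhigh x v -> E v z ->
  Qhigh x z.
Proof.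
move=> not_sx thr_x QHxv Evz; have [w1 w2] := unstable_window not_sx QHxv.
have [s1 s2] := unstable_short_edge not_sx thr_x QHxv Evz.
have := leq_K_pK; rewrite /clos_thr in thr_x => K_pK.
by apply: rt_trans QHxv (rt_step _); split=> //; lia.
Qed.

Lemma unstable_Q_Qhigh x y : ~ stable x -> clos_thr <= x -> Q x y -> Qhigh x y.
Proof.
move=> not_sx thr_x /clos_rt_rtn1_iff; elim=> [|{}y z Eyz _ IH]; first exact: rt_refl.
exact: unstable_QH_step IH Eyz.
Qed.

Lemma unstable_shift_step x y z : ~ stable x -> clos_thr <= x -> Qhigh x y ->
  E (y + clos_period) z -> clos_period <= z /\ Qhigh x (z - clos_period).
Proof.
move=> not_sx thr_x QHxy Eyz; have [w1 w2] := unstable_window not_sx QHxy.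
have := leq_K_pK; have := leq_pK_clos_period; rewrite /clos_thr in thr_x => pK_P K_pK.
have shift_E w : K <= w -> E y w <-> E (y + clos_period) (w + clos_period).
  by move=> Kw; rewrite clos_period_mulnp -(ult_periodic_shiftn E_per) //; lia.
have no_edge w : E y w -> y < w + K /\ w < y + K.
  exact: unstable_short_edge not_sx thr_x QHxy.
case: (ltnP z (y + clos_period + K)) => [z_low|z_high]; last first.
  have /no_edge : E y (z - clos_period) by rewrite shift_E ?subnK //; lia.
  lia.
case: (ltnP (y + clos_period) (z + K)) => [z_near|z_far].
  have zP : clos_period <= z by lia.
  split=> //; apply: (unstable_QH_step not_sx thr_x QHxy).
  by rewrite shift_E ?subnK //; lia.
exfalso; case: (ltnP y (z + K)) => [y_low|y_high].
  pose z' := z %% p + p * K.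
  have: E z' y.
    apply/(ult_periodic_modp E_per (m := z) (n := y + clos_period)); try lia.
    - by rewrite /z' addnC mulnC modnMDl modn_mod.
    - by rewrite clos_period_mulnp addnC modnMDl.
    exact: E_sym.
  move/E_sym/no_edge; have := ltn_pmod z p_gt0; lia.
have: E z y.
  rewrite (ult_periodic_gapn E_per ((p.+1 * K)`!)) // -clos_period_mulnp.
  exact: E_sym.
move/E_sym/no_edge; lia.
Qed.

Lemma unstable_Q_shift x y : ~ stable x -> clos_thr <= x -> Q (x + clos_period) y ->
  clos_period <= y /\ Qhigh x (y - clos_period).
Proof.
move=> not_sx thr_x /clos_rt_rtn1_iff; elim=> [|{}y z Eyz _ [Py IH]].
  by rewrite addnK leq_addl; split=> //; exact: rt_refl.
by apply: unstable_shift_step not_sx thr_x IH _; rewrite subnK.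
Qed.

Lemma unstable_Q_iff m n : ~ stable n -> clos_thr <= n ->
  (Q m n <-> Qhigh n m) /\ (Q (m + clos_period) (n + clos_period) <-> Qhigh n m).
Proof.
move=> not_sn thr_n; split; split.
- by move/Q_sym; apply: unstable_Q_Qhigh.
- by move/Qhigh_Q/Q_sym.
- by move/Q_sym/(unstable_Q_shift not_sn thr_n) => [_]; rewrite addnK.
- by move/Qhigh_shift_clos_period/Qhigh_Q/Q_sym.
Qed.

Lemma clos_rt_ult_periodic : ult_periodic Q clos_thr clos_period.
Proof.
have := leq_K_pK; have := leq_pK_clos_period => pK_P K_pK.
split; first exact: clos_period_gt0.
- move=> m n thr_m thr_n.
  case: (classic (stable n)) => [sn|not_sn]; last first.
    have [[h1 h2] [h3 h4]] := unstable_Q_iff m not_sn thr_n.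
    by split=> [/h1/h4|/h3/h2].
  case: (classic (stable m)) => [sm|not_sm]; last first.
    have [[h1 h2] [h3 h4]] := unstable_Q_iff n not_sm thr_m.
    by split=> [/Q_sym/h1/h4/Q_sym|/Q_sym/h3/h2/Q_sym].
  split=> Qmn; first exact: rt_trans (Q_sym sm) (rt_trans Qmn sn).
  exact: rt_trans sm (rt_trans Qmn (Q_sym sn)).
- move=> m n gap; have thr_n : clos_thr <= n by lia.
  case: (classic (stable n)) => [sn|not_sn].
    by split=> Qmn; [exact: rt_trans Qmn sn | exact: rt_trans Qmn (Q_sym sn)].
  have [[h1 _] _] := unstable_Q_iff m not_sn thr_n.
  rewrite /clos_thr in gap; split=> Qmn; exfalso.
  + by have [w1 w2] := unstable_window not_sn (h1 Qmn); lia.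
  + have [Pm QHnm] := unstable_Q_shift not_sn thr_n (Q_sym Qmn).
    by have [w1 w2] := unstable_window not_sn QHnm; lia.
Qed.

End EquivClosure.

Lemma iter_ult_periodic (A : finType) (f : A -> A) :
  exists K p, 0 < p /\ forall k x, K <= k -> iter (k + p) f x = iter k f x.
Proof.
pose g (k : 'I_#|{ffun A -> A}|.+1) : {ffun A -> A} := [ffun x => iter k f x].
have /injectivePn [i [j neq_ij eq_g]] : ~~ injectiveb g.
  by apply/injectiveP => /leq_card; rewrite card_ord ltnn.
have eq_iter x : iter i f x = iter j f x.
  by have := congr1 (fun h : {ffun A -> A} => h x) eq_g; rewrite !ffunE.
have periodic (a b : nat) : (forall x, iter a f x = iter b f x) -> a < b ->
    exists K p, 0 < p /\ forall k x, K <= k -> iter (k + p) f x = iter k f x.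
  move=> eq_ab lt_ab; exists a, (b - a); split=> [|k x ak]; first by rewrite subn_gt0.
  have -> : k + (b - a) = k - a + b by lia.
  by rewrite iterD -eq_ab -iterD subnK.
case: (ltngtP i j) => [lt_ij|lt_ji|/val_inj eq_ij]; first exact: periodic lt_ij.
- by apply: periodic lt_ji => x; rewrite eq_iter.
- by rewrite eq_ij eqxx in neq_ij.
Qed.

Lemma iter_periodic_dvd (A : Type) (f : A -> A) K p q k x :
  (forall k x, K <= k -> iter (k + p) f x = iter k f x) -> p %| q -> K <= k ->
  iter (k + q) f x = iter k f x.
Proof.
move=> per /dvdnP [c ->] Kk; elim: c => [|c IH]; first by rewrite addn0.
by rewrite mulSnr addnA per ?IH //; lia.
Qed.

Lemma foldl_nseq (A B : Type) (f : A -> B -> A) s k c :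
  foldl f s (nseq k c) = iter k (f^~ c) s.
Proof. by elim: k s => [|k IH] s //; rewrite iterSr -IH. Qed.

(* The letters of convolutions of two unary words: each track reads [a] or the
   padding [$] (encoded as [None]), abbreviated [A] and [D]. *)
Notation Sig := {ffun 'I_2 -> option unit}.
Definition AA : Sig := [ffun _ => Some tt].
Definition AD : Sig := [ffun i : 'I_2 => if i == ord0 then Some tt else None].
Definition DA : Sig := [ffun i : 'I_2 => if i == ord0 then None else Some tt].

Lemma AA_AD : (AA == AD) = false.
Proof. by apply/eqP => /ffunP /(_ ord_max); rewrite !ffunE. Qed.
Lemma AA_DA : (AA == DA) = false.
Proof. by apply/eqP => /ffunP /(_ ord0); rewrite !ffunE. Qed.
Lemma AD_DA : (AD == DA) = false.
Proof. by apply/eqP => /ffunP /(_ ord0); rewrite !ffunE. Qed.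

Definition conv2 m n : seq Sig :=
  nseq (minn m n) AA ++ nseq (m - n) AD ++ nseq (n - m) DA.

Lemma conv_unary2 m n : conv [tuple nseq m tt; nseq n tt] = conv2 m n.
Proof.
have max_size : \max_(i < 2) size (tnth [tuple nseq m tt; nseq n tt] i) = maxn m n.
  by rewrite big_ord_recr big_ord1 /= !size_nseq.
rewrite /conv max_size; apply: (@eq_from_nth _ AA).
  by rewrite size_mkseq /conv2 !size_cat !size_nseq; lia.
rewrite size_mkseq => j lt_j; rewrite nth_mkseq //; apply/ffunP => -[[|[|//]] i2].
all: rewrite ffunE onth_nseq /conv2 !nth_cat !size_nseq !nth_nseq /=.
all: by repeat case: ifP => //=; rewrite ?ffunE //=; lia.
Qed.

Lemma conv2_inj m n m' n' : conv2 m n = conv2 m' n' -> m = m' /\ n = n'.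
Proof.
move=> e; have count_eq c := congr1 (count (pred1 c)) e.
move: (count_eq AA) (count_eq AD) (count_eq DA).
rewrite /conv2 !count_cat !count_nseq /= [AD == AA]eq_sym [DA == AA]eq_sym.
by rewrite [DA == AD]eq_sym AA_AD AA_DA AD_DA !eqxx /=; lia.
Qed.

Lemma unary_nseq (s : seq unit) : s = nseq (size s) tt.
Proof. by elim: s => [|[] s IH] //=; rewrite -IH. Qed.

Lemma tuple2_unary (ws : 2.-tuple (seq unit)) :
  ws = [tuple nseq (size (tnth ws ord0)) tt; nseq (size (tnth ws ord_max)) tt].
Proof.
apply: eq_from_tnth => i; have [->|->] : i = ord0 \/ i = ord_max.
  by case: i => -[|[|//]] i2; [left|right]; apply: val_inj.
all: exact: unary_nseq.
Qed.

Definition conv2_lang (R : nat -> nat -> Prop) (w : seq Sig) : Prop :=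
  exists m n, w = conv2 m n /\ R m n.

Lemma dfa_conv2_ult_periodic (R : nat -> nat -> Prop) : regular (conv2_lang R) ->
  exists K p, [/\ 0 < K, ult_periodic R K p & ult_periodic (fun m n => R n m) K p].
Proof.
case=> M acc_M; have R_M m n : R m n <-> dfa_accepts M (conv2 m n).
  rewrite -acc_M; split=> [Rmn|[m' [n' [/conv2_inj [-> ->] //]]]].
  by exists m, n.
pose step (c : Sig) s := @dfa_trans Sig M s c.
pose run a b c :=
  iter c (step DA) (iter b (step AD) (iter a (step AA) (dfa_start M))).
have R_run m n : R m n <-> dfa_final (run (minn m n) (m - n) (n - m)).
  by rewrite R_M /dfa_accepts /conv2 !foldl_cat !foldl_nseq.
have [K1 [p1 [p1_gt0 per1]]] := iter_ult_periodic (step AA).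
have [K2 [p2 [p2_gt0 per2]]] := iter_ult_periodic (step AD).
have [K3 [p3 [p3_gt0 per3]]] := iter_ult_periodic (step DA).
have q_gt0 : 0 < p1 * p2 * p3 by rewrite !muln_gt0 p1_gt0 p2_gt0.
have run1 a b c : K1 <= a -> run (a + p1 * p2 * p3) b c = run a b c.
  by move=> Ka; rewrite /run (iter_periodic_dvd _ per1) // -mulnA dvdn_mulr.
have run2 a b c : K2 <= b -> run a (b + p1 * p2 * p3) c = run a b c.
  by move=> Kb; rewrite /run (iter_periodic_dvd _ per2) // dvdn_mulr ?dvdn_mull.
have run3 a b c : K3 <= c -> run a b (c + p1 * p2 * p3) = run a b c.
  by move=> Kc; rewrite /run (iter_periodic_dvd _ per3) // dvdn_mull.
move: (p1 * p2 * p3) q_gt0 run1 run2 run3 => q q_gt0 run1 run2 run3.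
exists (K1 + K2 + K3).+1, q; split=> //; split=> // m n *; rewrite !R_run.
- have -> : minn (m + q) (n + q) = minn m n + q by lia.
  by rewrite run1 ?subnDr //; lia.
- have [-> ->] : minn m (n + q) = minn m n /\ m - (n + q) = m - n by lia.
  by rewrite (_ : n + q - m = n - m + q) ?run3 //; lia.
- have -> : minn (n + q) (m + q) = minn n m + q by lia.
  by rewrite run1 ?subnDr //; lia.
- have [-> ->] : minn (n + q) m = minn n m /\ m - (n + q) = m - n by lia.
  by rewrite (_ : n + q - m = n - m + q) ?run2 //; lia.
Qed.

Section PeriodicAutomaton.
Variables (R : nat -> nat -> Prop) (T P : nat).
Hypothesis R_sym : forall m n, R m n -> R n m.
Hypothesis R_per : ult_periodic R T P.

Let P_gt0 := ult_periodic_gt0 R_per.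

(* A counter that runs through [0, T + P) and then cycles through [T, T + P):
   by periodicity it loses no information about [R]. *)
Definition cnt_succ a := if a.+1 < T + P then a.+1 else a.+1 - P.
Definition cnt k := iter k cnt_succ 0.

Lemma cnt_succ_cnt k : cnt_succ (cnt k) = cnt k.+1.
Proof. by rewrite /cnt iterS. Qed.

Lemma cnt_lt k : cnt k < T + P.
Proof.
have := P_gt0; elim: k => [|k IH] P0; rewrite /cnt /=; first lia.
by rewrite -/(cnt k) /cnt_succ; case: ifP => //; lia.
Qed.

Lemma cnt_small k : k < T + P -> cnt k = k.
Proof.
elim: k => [//|k IH] lt_k; rewrite -cnt_succ_cnt IH 1?ltnW //.
by rewrite /cnt_succ lt_k.
Qed.

Lemma cnt_large k : T <= k -> T <= cnt k /\ exists c, k = cnt k + c * P.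
Proof.
have := P_gt0; elim: k => [|k IH] P0 Tk.
  by split; [lia | exists 0; rewrite mul0n].
case: (ltnP k T) => [lt_kT|Tk'].
  have -> : k.+1 = T by lia.
  by rewrite cnt_small; [split=> //; exists 0; lia | lia].
have [Tc [c def_k]] := IH P0 Tk'; have := cnt_lt k.
rewrite -cnt_succ_cnt /cnt_succ; case: ifP => wrap lt_c.
  by split; [lia | exists c; lia].
by split; [lia | exists c.+1; rewrite mulSnr; lia].
Qed.

Lemma R_cnt m d : R m (m + d) <-> R (cnt m) (cnt m + cnt d).
Proof.
have R_d : R m (m + d) <-> R m (m + cnt d).
  case: (ltnP d (T + P)) => [/cnt_small -> //|lt_d].
  have [Tc [c def_d]] := cnt_large (leq_trans (leq_addr _ _) lt_d).
  by rewrite {1}def_d addnA -(ult_periodic_gapn R_per) //; lia.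
rewrite R_d; case: (ltnP m (T + P)) => [/cnt_small -> //|lt_m].
have [Tc [c def_m]] := cnt_large (leq_trans (leq_addr _ _) lt_m).
rewrite {1 2}def_m (ult_periodic_shiftn R_per c (m := cnt m)) //; last by lia.
by rewrite addnAC.
Qed.

(* [inord] needs the bound in successor form; [T + P] is positive. *)
Local Notation N := (T + P).-1.+1.
Definition state := option ('I_3 * 'I_N * 'I_N).

(* In [mkstate ph a b], [ph] tells which block of a [conv2] is being read
   ([0]: [AA], [1]: [AD], [2]: [DA]), and [a] and [b] count the common part
   and the overhang. *)
Definition mkstate (ph a b : nat) : state := Some (inord ph, inord a, inord b).

Definition trans (s : state) (c : Sig) : state :=
  if s is Some (ph, a, b) then
    if c == AA then (if ph == 0 :> nat then mkstate 0 (cnt_succ a) b else None)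
    else if c == AD then (if ph <= 1 then mkstate 1 a (cnt_succ b) else None)
    else if c == DA then
      (if (ph == 0 :> nat) || (ph == 2 :> nat) then mkstate 2 a (cnt_succ b) else None)
    else None
  else None.

Definition final (s : state) : bool :=
  if s is Some (_, a, b) then
    if excluded_middle_informative (R a (a + b)) then true else false
  else false.

Definition automaton : dfa Sig := DFA (mkstate 0 0 0) final trans.

Lemma inord_N x : x < T + P -> nat_of_ord (inord x : 'I_N) = x.
Proof. by move=> lt_x; rewrite inordK // prednK //; have := P_gt0; lia. Qed.

Lemma trans_mk ph a b c : ph < 3 -> a < T + P -> b < T + P ->
  trans (mkstate ph a b) c =
    if c == AA then (if ph == 0 then mkstate 0 (cnt_succ a) b else None)
    else if c == AD then (if ph <= 1 then mkstate 1 a (cnt_succ b) else None)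
    else if c == DA then
      (if (ph == 0) || (ph == 2) then mkstate 2 a (cnt_succ b) else None)
    else None.
Proof. by move=> ph3 lt_a lt_b; rewrite /trans /mkstate !inord_N // inordK. Qed.

Lemma run_AA k : foldl trans (mkstate 0 0 0) (nseq k AA) = mkstate 0 (cnt k) 0.
Proof.
rewrite foldl_nseq; elim: k => [//|k IH].
by rewrite iterS IH trans_mk ?cnt_lt ?eqxx ?cnt_succ_cnt //; have := P_gt0; lia.
Qed.

Lemma run_AD a k : a < T + P ->
  foldl trans (mkstate 0 a 0) (nseq k AD) =
    mkstate (if k == 0 then 0 else 1) a (cnt k).
Proof.
move=> lt_a; rewrite foldl_nseq; elim: k => [//|k IH].
rewrite iterS IH trans_mk ?cnt_lt //; last by case: (k == 0).
by rewrite eq_sym AA_AD eqxx cnt_succ_cnt; case: (k == 0).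
Qed.

Lemma run_DA a k : a < T + P ->
  foldl trans (mkstate 0 a 0) (nseq k DA) =
    mkstate (if k == 0 then 0 else 2) a (cnt k).
Proof.
move=> lt_a; rewrite foldl_nseq; elim: k => [//|k IH].
rewrite iterS IH trans_mk ?cnt_lt //; last by case: (k == 0).
by rewrite eq_sym AA_DA eq_sym AD_DA eqxx cnt_succ_cnt; case: (k == 0).
Qed.

Definition phase m n := if m == n then 0 else if n < m then 1 else 2.

Lemma phase_lt3 m n : phase m n < 3.
Proof. by rewrite /phase; case: (m == n); case: (n < m). Qed.

Lemma phase_eq0 m n : phase m n == 0 -> m = n.
Proof. by rewrite /phase; case: (ltngtP m n). Qed.

Lemma phase_le1 m n : phase m n <= 1 -> n <= m.
Proof. by rewrite /phase; case: (ltngtP m n) => // /ltnW. Qed.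

Lemma phase_0or2 m n : (phase m n == 0) || (phase m n == 2) -> m <= n.
Proof. by rewrite /phase; case: (ltngtP m n) => // /ltnW. Qed.

Lemma run_conv2 m n : foldl trans (mkstate 0 0 0) (conv2 m n) =
  mkstate (phase m n) (cnt (minn m n)) (cnt (m - n + (n - m))).
Proof.
rewrite /conv2 !foldl_cat run_AA run_AD ?cnt_lt // /phase.
case: (ltngtP m n) => [lt_mn|lt_nm|->].
- have -> : m - n = 0 by lia.
  rewrite run_DA ?cnt_lt // add0n.
  by have -> : (n - m == 0) = false by apply/eqP; lia.
- have -> : n - m = 0 by lia.
  rewrite addn0 /=.
  by have -> : (m - n == 0) = false by apply/eqP; lia.
- by rewrite subnn.
Qed.

Lemma accepts_conv2 m n : dfa_accepts automaton (conv2 m n) <-> R m n.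
Proof.
have R_run : R (cnt (minn m n)) (cnt (minn m n) + cnt (m - n + (n - m))) <-> R m n.
  rewrite -R_cnt; case: (leqP m n) => [le_mn|lt_nm].
    by rewrite (_ : m + _ = n) //; lia.
  rewrite (_ : n + _ = m); last by lia.
  by split; apply: R_sym.
rewrite /dfa_accepts /= run_conv2 /final /mkstate !inord_N ?cnt_lt //.
case: excluded_middle_informative => R_cnt_mn /=.
- by split=> // _; apply/R_run.
- by split=> // /R_run.
Qed.

Lemma rcons_nseq (A : Type) k (c : A) : rcons (nseq k c) c = nseq k.+1 c.
Proof. by elim: k => //= k ->. Qed.

Lemma conv2_rcons_AA n : rcons (conv2 n n) AA = conv2 n.+1 n.+1.
Proof. by rewrite /conv2 !subnn !minnn /= !cats0 rcons_nseq. Qed.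

Lemma conv2_rcons_AD m n : n <= m -> rcons (conv2 m n) AD = conv2 m.+1 n.
Proof.
move=> le_nm; rewrite /conv2.
have [-> -> -> ->] : [/\ minn m n = n, minn m.+1 n = n, n - m = 0 & n - m.+1 = 0].
  by split; lia.
by rewrite !cats0 rcons_cat rcons_nseq subSn.
Qed.

Lemma conv2_rcons_DA m n : m <= n -> rcons (conv2 m n) DA = conv2 m n.+1.
Proof.
move=> le_mn; rewrite /conv2.
have [-> -> -> ->] : [/\ minn m n = m, minn m n.+1 = m, m - n = 0 & m - n.+1 = 0].
  by split; lia.
by rewrite rcons_cat rcons_nseq subSn.
Qed.

Lemma run_live w : foldl trans (mkstate 0 0 0) w <> None -> exists m n, w = conv2 m n.
Proof.
elim/last_ind: w => [|w c IH]; first by exists 0, 0.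
rewrite foldl_rcons => live.
have [m [n def_w]] : exists m n, w = conv2 m n.
  by apply: IH => dead; rewrite dead in live.
move: live; rewrite def_w run_conv2 trans_mk ?phase_lt3 ?cnt_lt //.
case: eqP => [-> | _].
  by case: ifP => // /phase_eq0 -> _; exists n.+1, n.+1; rewrite conv2_rcons_AA.
case: eqP => [-> | _].
  by case: ifP => // /phase_le1 le_nm _; exists m.+1, n; rewrite conv2_rcons_AD.
case: eqP => [-> | _] //.
by case: ifP => // /phase_0or2 le_mn _; exists m, n.+1; rewrite conv2_rcons_DA.
Qed.

Lemma automaton_spec w : dfa_accepts automaton w <-> conv2_lang R w.
Proof.
split=> [acc|[m [n [-> Rmn]]]]; last exact/accepts_conv2.
have [m [n def_w]] : exists m n, w = conv2 m n.
  by apply: run_live => dead; move: acc; rewrite /dfa_accepts /= dead.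
by exists m, n; split=> //; apply/accepts_conv2; rewrite -def_w.
Qed.

End PeriodicAutomaton.

Lemma regular_ext (Sigma : finType) (L L' : seq Sigma -> Prop) :
  (forall w, L w <-> L' w) -> regular L -> regular L'.
Proof. by move=> eqL [M acc]; exists M => w; rewrite -eqL. Qed.

Lemma regular_conv2_lang_ext (R R' : nat -> nat -> Prop) :
  (forall m n, R m n <-> R' m n) -> regular (conv2_lang R) -> regular (conv2_lang R').
Proof.
move=> eqR; apply: regular_ext => w.
by split=> -[m [n [-> Rmn]]]; exists m, n; split=> //; apply/eqR.
Qed.

Lemma ult_periodic_regular (R : nat -> nat -> Prop) T P :
  (forall m n, R m n -> R n m) -> ult_periodic R T P -> regular (conv2_lang R).
Proof.
by move=> R_sym R_per; exists (automaton R T P) => w; rewrite automaton_spec.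
Qed.

Lemma regular_rel_unary2 (S : Type) (phi : seq unit -> S) (Rr : 2.-tuple S -> Prop) :
  regular_rel (Lambda (fun _ => True) phi Rr) <->
  regular (conv2_lang (fun m n => Rr [tuple phi (nseq m tt); phi (nseq n tt)])).
Proof.
suff eqL w : (exists ws, Lambda (fun _ => True) phi Rr ws /\ conv ws = w) <->
    conv2_lang (fun m n => Rr [tuple phi (nseq m tt); phi (nseq n tt)]) w.
  by split; apply: regular_ext => w; rewrite eqL.
have map_pair a b : map_tuple phi [tuple a; b] = [tuple phi a; phi b].
  exact: val_inj.
split=> [[ws [[_ Rws] <-]]|[m [n [-> Rmn]]]].
  exists (size (tnth ws ord0)), (size (tnth ws ord_max)); split.
    by rewrite {1}(tuple2_unary ws) conv_unary2.
  by move: Rws; rewrite {1}(tuple2_unary ws) map_pair.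
by exists [tuple nseq m tt; nseq n tt]; rewrite /Lambda conv_unary2 map_pair.
Qed.

Lemma regular_binrel_conv2 (S : Type) (phi : seq unit -> S) r
    (Rr : r.-tuple S -> Prop) (h : r = 2) :
  regular_rel (Lambda (fun _ => True) phi Rr) ->
  regular (conv2_lang (fun m n =>
    Rr (tcast (esym h) [tuple phi (nseq m tt); phi (nseq n tt)]))).
Proof. by subst r; rewrite regular_rel_unary2. Qed.

Theorem corollary4p7 (S : Type) (I : finType) (ar : I -> nat)
  (rels : forall i, (ar i).-tuple S -> Prop) (phi : seq unit -> S)
  (Hpres : injective_unary_FA_presentation rels phi)
  (i : I) (hi : ar i = 2) :
  let Q := gen_equiv (binrel rels hi) in
  regular_rel (Lambda (fun _ => True) phi
                 (fun t : 2.-tuple S => Q (tnth t ord0) (tnth t ord_max)))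
  /\ unary_FA_presentable (aug_rels rels Q).
Proof.
move=> Q; case: Hpres => [[regL phi_onto regEq regR] phi_inj].
pose f k := phi (nseq k tt); pose Rn m n := binrel rels hi (f m) (f n).
have f_inj : injective f by move=> m n /phi_inj /(congr1 size); rewrite !size_nseq.
have f_onto y : exists k, f k = y.
  by have [w [_ <-]] := phi_onto y; exists (size w); rewrite /f -unary_nseq.
have [K [p [K_gt0 per per_flip]]] :=
  dfa_conv2_ult_periodic (regular_binrel_conv2 hi (regR i)).
pose E m n := Rn m n \/ Rn n m.
have E_sym m n : E m n -> E n m by case; [right | left].
have Q_conv2 : regular (conv2_lang (clos_refl_trans nat E)).
  apply: (ult_periodic_regular (clos_rt_sym E_sym)).
  exact: (clos_rt_ult_periodic K_gt0 E_sym (ult_periodic_or per per_flip)).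
have part1 : regular_rel (Lambda (fun _ => True) phi
    (fun t : 2.-tuple S => Q (tnth t ord0) (tnth t ord_max))).
  rewrite regular_rel_unary2; apply: regular_conv2_lang_ext Q_conv2 => m n.
  by rewrite -(clos_rst_bij _ f_inj f_onto).
split=> //; exists (fun _ => True), phi.
by split=> // -[j|] /=; [exact: regR | exact: part1].
Qed.
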